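(* For any legal abstract path $\tau$, $w(\tau)=1+O(\tau)+B(\tau)$. In particular, a legal abstract path has weight $1$ if and only if it consists of a single interior abstract edge.
   Context: $\mathbb F=\{0,1\}$, $\mathbb N=\{0,1,2,\dots\}$. Abstract vertex types: $o$ (interior), $u$ (unstable), $s$ (stable). An abstract edge is $\varepsilon=(\mu,(o_1,u_1,s_1),(o_2,u_2,s_2))\in\mathbb F\times\mathbb N^3\times\mathbb N^3$ such that if $\mu=0$ then $s_1=u_2=0$, and if $\mu=1$ then $o_1=o_2=0$ (interior if $\mu=0$, boundary if $\mu=1$). Weight: $w(\varepsilon)=1$ if $\mu=0$, $2-s_1-u_2$ if $\mu=1$. An abstract path $\tau=(T,\tau,\sigma)$: a non-empty finite directed tree $T=(V,E)$ (nodes; arrows, also called breaks), $\tau:V\to$ abstract edges, $\sigma:E\to\{o,u,s\}$, such that for every node $v$ and type $X\in\{o,u,s\}$, $X_1(v)\ge|\{e:t(e)=v,\sigma(e)=X\}|$ and $X_2(v)\ge|\{e:s(e)=v,\sigma(e)=X\}|$, with $X_i(v)$ the entries of $\tau(v)$. Ends: $X_1(\tau)=\sum_vX_1(v)-|\sigma^{-1}(X)|$, $X_2(\tau)=\sum_vX_2(v)-|\sigma^{-1}(X)|$. $\tau$ is legal if $s_1(\tau)=u_2(\tau)=0$. Weight $w(\tau)=\sum_vw(\tau(v))$. $O(\tau)=|\sigma^{-1}(o)|$ is the number of interior breaks and $B(\tau)$ the number of nodes $v$ with $\mu(v)=1$ (boundary edges). *)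

From HB Require Import structures.
From mathcomp Require Import all_boot all_order all_algebra.
Set Implicit Arguments. Unset Strict Implicit. Unset Printing Implicit Defensive.
Import GRing.Theory Num.Theory.
Local Open Scope ring_scope.
Local Open Scope nat_scope.

(* Abstract vertex types o (interior), u (unstable), s (stable). *)
Inductive vtype := VO | VU | VS.

Definition vtype_eqb (a b : vtype) : bool :=
  match a, b with VO, VO | VU, VU | VS, VS => true | _, _ => false end.
Lemma vtype_eqP : Equality.axiom vtype_eqb.
Proof. by case; case; constructor. Qed.
HB.instance Definition _ := hasDecEq.Build vtype vtype_eqP.

(* An abstract edge (mu, (o1,u1,s1), (o2,u2,s2)); mu = false is mu = 0
   (interior edge), mu = true is mu = 1 (boundary edge). *)
Record aedge := AEdge {
  mu : bool;
  o1 : nat; u1 : nat; s1 : nat;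
  o2 : nat; u2 : nat; s2 : nat }.

Definition aedge_valid (a : aedge) : Prop :=
  (mu a = false -> s1 a = 0%N /\ u2 a = 0%N) /\
  (mu a = true -> o1 a = 0%N /\ o2 a = 0%N).

Definition X1 (a : aedge) (X : vtype) : nat :=
  match X with VO => o1 a | VU => u1 a | VS => s1 a end.
Definition X2 (a : aedge) (X : vtype) : nat :=
  match X with VO => o2 a | VU => u2 a | VS => s2 a end.

Definition aweight (a : aedge) : int :=
  if mu a then (2%:Z - (s1 a)%:Z - (u2 a)%:Z)%R else (1%:Z)%R.

Section Graph.
Variables (V E : finType) (src tgt : E -> V).

Definition uadj : rel V := fun a b =>
  [exists e : E, ((src e == a) && (tgt e == b)) || ((src e == b) && (tgt e == a))].

Definition gconnected : Prop := forall x y : V, connect uadj x y.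

(* traversal of an arrow, forwards (true) or backwards (false) *)
Definition tstart (p : E * bool) : V := if p.2 then src p.1 else tgt p.1.
Definition tend (p : E * bool) : V := if p.2 then tgt p.1 else src p.1.

Definition closed_trail (w : seq (E * bool)) : Prop :=
  [/\ w != [::], uniq (map fst w),
      (forall p0 i, (i.+1 < size w)%N ->
         tend (nth p0 w i) = tstart (nth p0 w i.+1)) &
      (forall p0, tend (last p0 w) = tstart (head p0 w))].

Definition gacyclic : Prop := forall w, ~ closed_trail w.

Definition dtree : Prop := [/\ (0 < #|V|)%N, gconnected & gacyclic].
End Graph.

Section AbstractPath.
Variables (V E : finType) (src tgt : E -> V) (tau : V -> aedge) (sigma : E -> vtype).

Definition in_count (v : V) (X : vtype) : nat :=
  #|[set e : E | (tgt e == v) && (sigma e == X)]|.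
Definition out_count (v : V) (X : vtype) : nat :=
  #|[set e : E | (src e == v) && (sigma e == X)]|.

Definition abstract_path : Prop :=
  [/\ dtree src tgt,
      (forall v, aedge_valid (tau v)) &
      (forall v X, in_count v X <= X1 (tau v) X /\ out_count v X <= X2 (tau v) X)%N].

Definition nbreaks (X : vtype) : nat := #|[set e : E | sigma e == X]|.

Definition end1 (X : vtype) : nat := ((\sum_(v : V) X1 (tau v) X) - nbreaks X)%N.
Definition end2 (X : vtype) : nat := ((\sum_(v : V) X2 (tau v) X) - nbreaks X)%N.

Definition legal : Prop := end1 VS = 0%N /\ end2 VU = 0%N.

Definition pweight : int := \sum_(v : V) aweight (tau v).

Definition Obreaks : nat := nbreaks VO.
Definition Bnodes : nat := #|[set v : V | mu (tau v)]|.
End AbstractPath.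

From mathcomp Require Import all_boot all_order all_algebra.
From mathcomp Require Import zify.
Import GRing.Theory Num.Theory.
Set Implicit Arguments. Unset Strict Implicit. Unset Printing Implicit Defensive.
Local Open Scope ring_scope.
Local Open Scope nat_scope.

(* Every node v contributes w(v) + s_1(v) + u_2(v) = 1 + mu(v) (interior edges
   have s_1 = u_2 = 0).  Legality says that every stable entry s_1 is used by a
   stable break and every unstable entry u_2 by an unstable break, so summing
   over the tree gives w(tau) + #S + #U = |V| + B(tau) = 1 + |E| + B(tau), and
   |E| = #O + #U + #S.  The only graph-theoretic input is |E| = |V| - 1, proved
   by matching every non-root node with the arrow to its parent in a
   breadth-first tree: this is injective, and an arrow outside the image would
   close a cycle through the two parent chains of its ends. *)

Section Walks.
Variables (V E : finType) (src tgt : E -> V).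
Local Notation tstart := (tstart src tgt).
Local Notation tend := (tend src tgt).

Fixpoint walk (x y : V) (w : seq (E * bool)) : bool :=
  if w is q :: w' then (tstart q == x) && walk (tend q) y w' else x == y.

Definition flip (q : E * bool) : E * bool := (q.1, ~~ q.2).

Definition rev_walk (w : seq (E * bool)) := rev (map flip w).

Lemma walk_cat x y z w1 w2 : walk x y w1 -> walk y z w2 -> walk x z (w1 ++ w2).
Proof.
elim: w1 x => [|q w1 IH] x /=; first by move=> /eqP ->.
by move=> /andP [-> w1_yz] w2_yz; rewrite IH.
Qed.

Lemma walk_rev x y w : walk x y w -> walk y x (rev_walk w).
Proof.
rewrite /rev_walk; elim: w x => [|q w IH] x /=; first by move=> /eqP ->; rewrite eqxx.
move=> /andP [/eqP q_x w_xy]; rewrite rev_cons -cats1.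
apply: walk_cat (IH _ w_xy) _; move: q_x.
by rewrite /= /tstart /tend /flip /=; case: q.2 => /= ->; rewrite !eqxx.
Qed.

Lemma map_fst_rev_walk w : map fst (rev_walk w) = rev (map fst w).
Proof. by rewrite /rev_walk map_rev -map_comp. Qed.

Lemma walk_nth x y w p0 i : walk x y w -> i.+1 < size w ->
  tend (nth p0 w i) = tstart (nth p0 w i.+1).
Proof.
elim: w x i => [|q w IH] x [|i] //= /andP [_ w_qy]; last exact: IH w_qy.
by case: w w_qy {IH} => [|q' w'] //= /andP [/eqP ->].
Qed.

Lemma walk_last x y w p0 : walk x y w -> w != [::] -> tend (last p0 w) = y.
Proof.
elim: w x p0 => [|q w IH] x p0 //= /andP [_ w_qy] _.
by case: w w_qy IH => [|q' w'] /= w_qy IH; [apply/eqP | apply: IH w_qy _].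
Qed.

Lemma closed_trail_walk x w :
  walk x x w -> w != [::] -> uniq (map fst w) -> closed_trail src tgt w.
Proof.
move=> w_xx w_nil w_uniq; split=> // [p0 i|p0]; first exact: walk_nth w_xx.
rewrite (walk_last p0 w_xx w_nil).
by case: w w_xx w_nil {w_uniq} => [|q w] //= /andP [/eqP ->].
Qed.

End Walks.

Section BreadthFirstTree.
Variables (V E : finType) (src tgt : E -> V).
Hypothesis connected : gconnected src tgt.
Variable r : V.

Local Notation adj := (uadj src tgt).
Local Notation walk := (walk src tgt).

Definition reaches_root_in v n :=
  [exists t : n.-tuple V, path adj v t && (last v t == r)].

Lemma reaches_root v : exists n, reaches_root_in v n.
Proof.
have /connectP [p p_path p_last] := connected v r.
by exists (size p); apply/existsP; exists (in_tuple p); rewrite p_path -p_last eqxx.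
Qed.

Definition depth v := ex_minn (reaches_root v).

Lemma depth_root : depth r = 0.
Proof.
rewrite /depth; case: ex_minnP => m _ m_min; apply/eqP; rewrite -leqn0.
by apply: m_min; apply/existsP; exists [tuple]; rewrite /= eqxx.
Qed.

Lemma depth_eq0 v : depth v = 0 -> v = r.
Proof.
rewrite /depth; case: ex_minnP => m /existsP [t /andP [_ /eqP t_last]] _ m0.
by move: t t_last; rewrite m0 => t; rewrite tuple0.
Qed.

Lemma depth_gt0 v : v != r -> 0 < depth v.
Proof. by move=> v_r; rewrite lt0n; apply: contra_neq v_r => /depth_eq0. Qed.

Lemma depth_adj v y : adj v y -> depth v <= (depth y).+1.
Proof.
move=> vy; rewrite {2}/depth; case: ex_minnP => m /existsP [t /andP [t_path t_last]] _.
rewrite /depth; case: ex_minnP => m' _ m'_min; apply: m'_min.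
by apply/existsP; exists [tuple of y :: t]; rewrite /= vy t_path.
Qed.

Lemma exists_lower_neighbour v : v != r -> exists y, adj v y && (depth y < depth v).
Proof.
move=> v_r; rewrite {2}/depth; case: ex_minnP => m /existsP [t /andP [t_path t_last]] _.
case: t t_path t_last => -[|y s] size_t /=; first by move=> _ /eqP v_eq; rewrite v_eq eqxx in v_r.
move=> /andP [vy s_path] s_last; exists y; rewrite vy /=.
have size_s : size s == m.-1 by move: size_t => /= /eqP <-.
rewrite /depth; case: ex_minnP => m' _ m'_min.
have : m' <= m.-1 by apply: m'_min; apply/existsP; exists (Tuple size_s); rewrite /= s_path.
by move: size_t => /= /eqP <- /=; lia.
Qed.

Definition parent v := odflt r [pick y | adj v y && (depth y < depth v)].

Lemma parent_spec v : v != r -> adj v (parent v) /\ depth (parent v) = (depth v).-1.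
Proof.
move=> v_r; rewrite /parent; case: pickP => [y /andP [vy lt_y] | none] /=.
  by have := depth_adj vy; split=> //; lia.
by have [y vy] := exists_lower_neighbour v_r; rewrite none in vy.
Qed.

Lemma depth_parent v : depth (parent v) = (depth v).-1.
Proof.
have [->|v_r] := eqVneq v r; last by case: (parent_spec v_r).
by rewrite /parent; case: pickP => [y /andP []|] /=; rewrite depth_root.
Qed.

Lemma depth_iter_parent k v : depth (iter k parent v) = depth v - k.
Proof. by elim: k => [|k IH]; rewrite ?subn0 // iterS depth_parent IH; lia. Qed.

Lemma iter_parent_depth v : iter (depth v) parent v = r.
Proof. by apply: depth_eq0; rewrite depth_iter_parent subnn. Qed.

Lemma traject_parent_nonroot x k v :
  k <= depth x -> v \in traject parent x k -> v != r.
Proof.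
move=> k_le /trajectP [i i_lt ->]; apply/eqP => root.
by have := depth_iter_parent i x; rewrite root depth_root; lia.
Qed.

Lemma uniq_traject_parent x k : k <= depth x -> uniq (traject parent x k).
Proof.
elim: k x => [|k IH] x //= k_le; rewrite IH ?depth_parent; last by lia.
rewrite andbT; apply/trajectP => -[i _ x_eq].
by have := depth_iter_parent i (parent x); rewrite -x_eq depth_parent; lia.
Qed.

Definition joins v w e :=
  ((src e == v) && (tgt e == w)) || ((src e == w) && (tgt e == v)).

Lemma joins_ends a b c d e : joins a b e -> joins c d e ->
  (a = c /\ b = d) \/ (a = d /\ b = c).
Proof.
by rewrite /joins => /orP[] /andP [/eqP <- /eqP <-] /orP[] /andP [/eqP -> /eqP ->];
  [left | right | right | left].
Qed.

Lemma tend_joins v w e :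
  joins v w e -> tstart src tgt (e, src e == v) = v /\ tend src tgt (e, src e == v) = w.
Proof.
rewrite /joins /tstart /tend /=.
by case/orP => /andP [/eqP <- /eqP <-]; rewrite ?eqxx //; case: eqP.
Qed.

Definition parent_arrow v := [pick e | joins v (parent v) e].

Lemma parent_arrow_some v : v != r -> exists e, parent_arrow v = Some e.
Proof.
move=> v_r; have [/existsP [e ve] _] := parent_spec v_r.
rewrite /parent_arrow; case: pickP => [e' _|none]; first by exists e'.
by move: (none e); rewrite [in LHS]/joins ve.
Qed.

Lemma parent_arrow_joins v e : parent_arrow v = Some e -> joins v (parent v) e.
Proof. by rewrite /parent_arrow; case: pickP => [e' ve' [<-]|]. Qed.

Lemma parent_arrow_inj v w e : v != r -> w != r ->
  parent_arrow v = Some e -> parent_arrow w = Some e -> v = w.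
Proof.
move=> v_r w_r /parent_arrow_joins ve /parent_arrow_joins we.
case: (joins_ends ve we) => [[] // | [v_eq w_eq]].
have := depth_gt0 v_r; have := depth_gt0 w_r.
by have := depth_parent v; have := depth_parent w; rewrite -v_eq w_eq; lia.
Qed.

Section Climb.
Variable e0 : E.

Definition parent_arrow0 v := odflt e0 (parent_arrow v).

Lemma parent_arrow0E v : v != r -> parent_arrow v = Some (parent_arrow0 v).
Proof. by move=> /parent_arrow_some [e e_v]; rewrite /parent_arrow0 e_v. Qed.

Lemma parent_arrow0_inj : {in [pred v | v != r] &, injective parent_arrow0}.
Proof.
move=> v w v_r w_r vw; apply: (parent_arrow_inj v_r w_r (parent_arrow0E v_r)).
by rewrite vw parent_arrow0E.
Qed.

Definition climb x k :=
  [seq (parent_arrow0 v, src (parent_arrow0 v) == v) | v <- traject parent x k].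

Lemma map_fst_climb x k : map fst (climb x k) = map parent_arrow0 (traject parent x k).
Proof. by rewrite -map_comp. Qed.

Lemma walk_climb x k : k <= depth x -> walk x (iter k parent x) (climb x k).
Proof.
elim: k x => [|k IH] x k_le //=.
have x_r : x != r by apply/eqP => x_eq; rewrite x_eq depth_root in k_le.
have [-> ->] := tend_joins (parent_arrow_joins (parent_arrow0E x_r)).
by rewrite eqxx -iterS iterSr IH // depth_parent; lia.
Qed.

Lemma uniq_climb_trail x y k l :
  k <= depth x -> l <= depth y ->
  [disjoint traject parent x k & traject parent y l] ->
  uniq (map fst (climb x k ++ rev_walk (climb y l))).
Proof.
move=> k_le l_le disj; rewrite map_cat map_fst_rev_walk !map_fst_climb.
rewrite cat_uniq rev_uniq has_rev -cat_uniq -map_cat map_inj_in_uniq.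
  by rewrite cat_uniq !uniq_traject_parent //= andbT -disjoint_has disjoint_sym.
apply: sub_in2 parent_arrow0_inj => v; rewrite mem_cat => /orP[];
  exact: traject_parent_nonroot.
Qed.

End Climb.

Hypothesis acyclic : gacyclic src tgt.

Lemma parent_arrow_surj e : exists2 v, v != r & parent_arrow v = Some e.
Proof.
have [/existsP [v /andP [v_r /eqP ve]] | /existsPn not_parent] :=
  boolP [exists v, (v != r) && (parent_arrow v == Some e)]; first by exists v.
exfalso; set a := src e; set b := tgt e.
pose meets k := iter k parent b \in traject parent a (depth a).+1.
have meets_depth : meets (depth b).
  by apply/trajectP; exists (depth a); rewrite ?iter_parent_depth.
case: (ex_minnP (ex_intro meets _ meets_depth)) => j /trajectP [l l_lt meet_eq] j_min.
have j_le : j <= depth b by apply: j_min.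
have l_le : l <= depth a by [].
pose W := (e, true) :: climb e b j ++ rev_walk (climb e a l).
have W_aa : walk a a W.
  rewrite /= /tstart /tend /= eqxx /=; apply: walk_cat (walk_climb e j_le) _.
  by rewrite meet_eq; apply: walk_rev (walk_climb e l_le).
have disj : [disjoint traject parent b j & traject parent a l].
  apply/pred0P => v /=; apply/negP => /andP [/trajectP [k k_lt ->] /trajectP [i i_lt i_eq]].
  suff : j <= k by lia.
  by apply: j_min; apply/trajectP; exists i; first lia.
apply: (acyclic (closed_trail_walk W_aa _ _)) => //=.
rewrite uniq_climb_trail // andbT map_cat map_fst_rev_walk !map_fst_climb.
rewrite mem_cat mem_rev -mem_cat -map_cat; apply/mapP => -[v v_in e_eq].
have v_r : v != r by move: v_in; rewrite mem_cat => /orP[];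
  exact: traject_parent_nonroot.
by have := not_parent v; rewrite v_r (parent_arrow0E e v_r) -e_eq eqxx.
Qed.

Lemma card_arrows_rooted : #|E| = #|V|.-1.
Proof.
rewrite -(cardsC1 r) -(card_in_imset (f := parent_arrow)); last first.
  move=> v w; rewrite !in_setC1 => v_r w_r vw.
  have [e ve] := parent_arrow_some v_r.
  by apply: (parent_arrow_inj v_r w_r ve); rewrite -vw.
suff -> : parent_arrow @: [set~ r] = Some @: [set: E].
  by rewrite card_imset ?cardsT // => ? ? [].
apply/setP => -[e|]; apply/imsetP/imsetP.
- by exists e.
- by have [v v_r ve] := parent_arrow_surj e; exists v; rewrite ?in_setC1.
- by case=> v; rewrite in_setC1 => /parent_arrow_some [e ve]; rewrite ve.
- by case.
Qed.

End BreadthFirstTree.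

Lemma card_nodes_dtree (V E : finType) (src tgt : E -> V) :
  dtree src tgt -> #|V| = #|E|.+1.
Proof.
case=> V_gt0 connected acyclic; have /card_gt0P [r _] := V_gt0.
by rewrite (card_arrows_rooted connected r acyclic) prednK.
Qed.

Lemma card_set_sum (T : finType) (P : pred T) : #|[set x | P x]| = \sum_(x : T) P x.
Proof. by rewrite -sum1_card big_mkcond /=; apply: eq_bigr => x _; rewrite inE; case: P. Qed.

Lemma aweight_balance a : aedge_valid a ->
  (aweight a + (s1 a)%:Z + (u2 a)%:Z = 1 + (mu a : nat)%:Z)%R.
Proof.
move=> [interior _]; rewrite /aweight.
by case: (mu a) interior => [_ | /(_ erefl) [-> ->]] /=; lia.
Qed.

Lemma pweight_balance (V : finType) (tau : V -> aedge) :
  (forall v, aedge_valid (tau v)) ->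
  (pweight tau + (\sum_(v : V) s1 (tau v))%:Z + (\sum_(v : V) u2 (tau v))%:Z
   = #|V|%:Z + (Bnodes tau)%:Z)%R.
Proof.
move=> valid; rewrite /pweight /Bnodes card_set_sum -sum1_card.
rewrite !(big_morph Posz PoszD (erefl _)) -!big_split /=.
by apply: eq_bigr => v _; apply: aweight_balance.
Qed.

Lemma Bnodes_eq0 (V : finType) (tau : V -> aedge) :
  Bnodes tau = 0 <-> forall v, mu (tau v) = false.
Proof.
rewrite /Bnodes; split=> [/cards0_eq B0 v | interior].
  by apply/negP => mu_v; have := in_set0 v; rewrite -B0 inE mu_v.
by apply/eqP; rewrite cards_eq0; apply/eqP/setP => v; rewrite !inE interior.
Qed.

Lemma interior_ends_eq0 (V : finType) (tau : V -> aedge) :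
  (forall v, aedge_valid (tau v)) -> (forall v, mu (tau v) = false) ->
  \sum_(v : V) s1 (tau v) = 0 /\ \sum_(v : V) u2 (tau v) = 0.
Proof.
move=> valid interior.
by split; apply: big1 => v _; case: (valid v) => /(_ (interior v)) [s1_0 u2_0].
Qed.

Section AbstractPathWeight.
Variables (V E : finType) (src tgt : E -> V) (tau : V -> aedge) (sigma : E -> vtype).

Lemma nbreaks_partition (f : E -> V) X :
  nbreaks sigma X = \sum_(v : V) #|[set e : E | (f e == v) && (sigma e == X)]|.
Proof.
rewrite /nbreaks card_set_sum; under [RHS]eq_bigr do rewrite card_set_sum.
rewrite exchange_big /=; apply: eq_bigr => e _.
by rewrite (bigD1 (f e)) //= eqxx big1 ?addn0 // => v /negbTE; rewrite eq_sym => ->.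
Qed.

Lemma card_arrows_nbreaks : #|E| = nbreaks sigma VO + nbreaks sigma VU + nbreaks sigma VS.
Proof.
rewrite /nbreaks !card_set_sum -!big_split -sum1_card /=.
by apply: eq_bigr => e _; case: (sigma e).
Qed.

Hypothesis tau_path : abstract_path src tgt tau sigma.
Hypothesis tau_legal : legal tau sigma.

Lemma sum_s1_legal : \sum_(v : V) s1 (tau v) = nbreaks sigma VS.
Proof.
have : nbreaks sigma VS <= \sum_(v : V) s1 (tau v).
  rewrite (nbreaks_partition tgt); apply: leq_sum => v _.
  by case: tau_path => _ _ /(_ v VS) [].
by case: tau_legal; rewrite /end1 /=; lia.
Qed.

Lemma sum_u2_legal : \sum_(v : V) u2 (tau v) = nbreaks sigma VU.
Proof.
have : nbreaks sigma VU <= \sum_(v : V) u2 (tau v).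
  rewrite (nbreaks_partition src); apply: leq_sum => v _.
  by case: tau_path => _ _ /(_ v VU) [].
by case: tau_legal; rewrite /end2 /=; lia.
Qed.

Lemma pweight_legal : pweight tau = (1 + (Obreaks sigma)%:Z + (Bnodes tau)%:Z)%R.
Proof.
case: tau_path => /card_nodes_dtree card_E valid _.
have := pweight_balance valid; have := card_arrows_nbreaks.
by rewrite /Obreaks sum_s1_legal sum_u2_legal; lia.
Qed.

End AbstractPathWeight.

Theorem proposition3p10 (V E : finType) (src tgt : E -> V)
    (tau : V -> aedge) (sigma : E -> vtype) :
  abstract_path src tgt tau sigma ->
  legal tau sigma ->
  pweight tau = (1 + (Obreaks sigma)%:Z + (Bnodes tau)%:Z)%R /\
  (pweight tau = 1%:Z <-> (#|V| = 1%N /\ forall v : V, mu (tau v) = false)).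
Proof.
move=> tau_path tau_legal; have [tree valid _] := tau_path.
have weight := pweight_legal tau_path tau_legal.
have card_V := card_nodes_dtree tree; have breaks := card_arrows_nbreaks sigma.
split=> //; rewrite /Obreaks in weight.
split=> [w1 | [V1 /Bnodes_eq0 B0]]; last by rewrite weight B0; lia.
have B0 : Bnodes tau = 0 by lia.
have [s1_0 u2_0] := interior_ends_eq0 valid (proj1 (Bnodes_eq0 tau) B0).
move: breaks; rewrite -(sum_s1_legal tau_path tau_legal) -(sum_u2_legal tau_path tau_legal).
by rewrite s1_0 u2_0; split; [lia | apply/Bnodes_eq0].
Qed.
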